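(* Let $i=\sqrt{-1}$, let $\alpha>0$, and let $\lambda\in\mathbb C$ satisfy $\Im\lambda\notin\{\alpha,-\alpha\}$. Define $u_0=\alpha i+\lambda$, $w_0=\alpha i-\lambda$, and for $h=0,1,\dots$ $$u_{h+1}=\tfrac12\left(u_h-1/u_h\right),\qquad w_{h+1}=\tfrac12\left(w_h-1/w_h\right).$$ Then all $u_h,w_h$ are well defined and nonzero, and $$\lim_{h\to\infty}(u_h+w_h)=\begin{cases}2i,& |\Im\lambda|<\alpha,\\ 0,& |\Im\lambda|>\alpha.\end{cases}$$ *)

From Stdlib Require Import Reals.
Open Scope R_scope.

Definition Cplx : Type := (R * R)%type.
Definition Re (z : Cplx) : R := fst z.
Definition Im (z : Cplx) : R := snd z.
Definition C0 : Cplx := (0, 0).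
Definition C1 : Cplx := (1, 0).
Definition Ci : Cplx := (0, 1).
Definition RtoC (r : R) : Cplx := (r, 0).
Definition Cadd (z w : Cplx) : Cplx := (Re z + Re w, Im z + Im w).
Definition Copp (z : Cplx) : Cplx := (- Re z, - Im z).
Definition Csub (z w : Cplx) : Cplx := Cadd z (Copp w).
Definition Cmul (z w : Cplx) : Cplx :=
  (Re z * Re w - Im z * Im w, Re z * Im w + Im z * Re w).
(* usual complex inverse; total (gives 0 at 0 since Rinv 0 = 0) *)
Definition Cinv (z : Cplx) : Cplx :=
  (Re z / (Re z ^ 2 + Im z ^ 2), - Im z / (Re z ^ 2 + Im z ^ 2)).
Definition Cdiv (z w : Cplx) : Cplx := Cmul z (Cinv w).
Definition Cmod (z : Cplx) : R := sqrt (Re z ^ 2 + Im z ^ 2).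

Definition Ccv (s : nat -> Cplx) (l : Cplx) : Prop :=
  forall eps : R, eps > 0 ->
    exists N : nat, forall n : nat, (n >= N)%nat -> Cmod (Csub (s n) l) < eps.

Definition step (z : Cplx) : Cplx := Cmul (RtoC (/ 2)) (Csub z (Cinv z)).
Fixpoint iter_seq (z0 : Cplx) (h : nat) : Cplx :=
  match h with
  | O => z0
  | S h' => step (iter_seq z0 h')
  end.

Definition u_seq (alpha : R) (lam : Cplx) : nat -> Cplx :=
  iter_seq (Cadd (Cmul (RtoC alpha) Ci) lam).
Definition w_seq (alpha : R) (lam : Cplx) : nat -> Cplx :=
  iter_seq (Csub (Cmul (RtoC alpha) Ci) lam).

(** The map [z |-> (z - 1/z)/2] is Newton's method for [z^2 + 1 = 0]. Writing
    [d z c = |z - c i|^2], one has [4 |z|^2 d (step z) s = (d z s)^2] for both roots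
    [s = 1] and [s = -1], so the ratio [d z s / d z (-s)] is squared by every step.
    Each open half-plane [0 < s Im z] is invariant, and there the ratio lies in [[0, 1)],
    hence tends to [0]: the iterates converge to the root [s i] of their half-plane.
    Now [u_0] and [w_0] have imaginary parts [alpha + Im lambda] and [alpha - Im lambda];
    both are positive when [|Im lambda| < alpha], and they have opposite signs when
    [|Im lambda| > alpha]. *)

From Stdlib Require Import Reals Lra Lia.
From Coquelicot Require Complex.
Open Scope R_scope.

Definition Cnorm2 (z : Cplx) : R := Re z ^ 2 + Im z ^ 2.

Definition dist2_i (z : Cplx) (c : R) : R := Cnorm2 (Csub z (0, c)).

Lemma Cnorm2_ge0 (z : Cplx) : 0 <= Cnorm2 z.
Proof. unfold Cnorm2; pose proof (pow2_ge_0 (Re z)); pose proof (pow2_ge_0 (Im z)); lra. Qed.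

Lemma Cnorm2_pos (z : Cplx) : Im z <> 0 -> 0 < Cnorm2 z.
Proof.
  intros Hy; unfold Cnorm2.
  pose proof (pow2_ge_0 (Re z)); pose proof (Rsqr_pos_lt _ Hy); unfold Rsqr in *; nra.
Qed.

Lemma ratio_in_unit (a b : R) : 0 <= a < b -> 0 <= a / b < 1.
Proof.
  intros Hab; split.
  - apply Rmult_le_pos; [lra | left; apply Rinv_0_lt_compat; lra].
  - apply (Rmult_lt_reg_r b); [lra|]; unfold Rdiv.
    rewrite Rmult_assoc, Rinv_l, Rmult_1_r, Rmult_1_l; lra.
Qed.

Lemma Ccv_add (a b : nat -> Cplx) (l m : Cplx) :
  Ccv a l -> Ccv b m -> Ccv (fun n => Cadd (a n) (b n)) (Cadd l m).
Proof.
  intros Ha Hb eps Heps.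
  destruct (Ha (eps / 2)) as [Na HNa]; [lra|].
  destruct (Hb (eps / 2)) as [Nb HNb]; [lra|].
  exists (Nat.max Na Nb); intros n Hn.
  replace (Csub (Cadd (a n) (b n)) (Cadd l m)) with (Cadd (Csub (a n) l) (Csub (b n) m))
    by (destruct (a n), (b n), l, m; unfold Csub, Cadd, Copp, Re, Im; simpl; f_equal; ring).
  assert (Htri : Cmod (Cadd (Csub (a n) l) (Csub (b n) m))
                 <= Cmod (Csub (a n) l) + Cmod (Csub (b n) m))
    by exact (Complex.Cmod_triangle (Csub (a n) l) (Csub (b n) m)).
  specialize (HNa n ltac:(lia)); specialize (HNb n ltac:(lia)); lra.
Qed.

Lemma Ccv_of_norm2_cv0 (a : nat -> Cplx) (l : Cplx) :
  Un_cv (fun n => Cnorm2 (Csub (a n) l)) 0 -> Ccv a l.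
Proof.
  intros Hcv eps Heps.
  destruct (Hcv (eps ^ 2)) as [N HN]; [apply pow_lt; lra|].
  exists N; intros n Hn; specialize (HN n Hn).
  unfold R_dist in HN; rewrite Rminus_0_r, Rabs_pos_eq in HN by apply Cnorm2_ge0.
  unfold Cmod; rewrite <- (sqrt_pow2 eps) by lra.
  apply sqrt_lt_1_alt; split; [apply Cnorm2_ge0 | exact HN].
Qed.

Lemma Un_cv_squaring (r : nat -> R) :
  0 <= r O < 1 -> (forall n, r (S n) = r n ^ 2) -> Un_cv r 0.
Proof.
  intros Hr0 Hrec.
  assert (Hbound : forall n, 0 <= r n <= r O /\ r n <= r O ^ S n).
  { induction n as [|n IH]; [simpl; lra|].
    rewrite Hrec, <- (tech_pow_Rmult _ (S n)); simpl (r n ^ 2); nra. }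
  intros eps Heps.
  destruct (pow_lt_1_zero (r O) ltac:(rewrite Rabs_pos_eq; lra) eps Heps) as [N HN].
  exists N; intros n Hn.
  specialize (HN (S n) ltac:(lia)); specialize (Hbound n).
  rewrite Rabs_pos_eq in HN by (apply pow_le; lra).
  unfold R_dist; rewrite Rminus_0_r, Rabs_pos_eq; lra.
Qed.

Lemma Im_step (z : Cplx) :
  Im z <> 0 -> Im (step z) = Im z * (Cnorm2 z + 1) / (2 * Cnorm2 z).
Proof.
  intros Hy; pose proof (Cnorm2_pos z Hy).
  destruct z as [x y]; unfold Cnorm2 in *;
    unfold step, Cmul, Csub, Cadd, Copp, Cinv, RtoC, Re, Im in *; simpl in *.
  field; lra.
Qed.

Lemma step_half_plane (s : R) (z : Cplx) : 0 < s * Im z -> 0 < s * Im (step z).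
Proof.
  intros H.
  assert (Hy : Im z <> 0) by (intro E; rewrite E in H; lra).
  pose proof (Cnorm2_pos z Hy).
  rewrite Im_step by exact Hy.
  replace (s * (Im z * (Cnorm2 z + 1) / (2 * Cnorm2 z)))
    with (s * Im z * ((Cnorm2 z + 1) / (2 * Cnorm2 z))) by (field; lra).
  apply Rmult_lt_0_compat; [exact H | apply Rdiv_lt_0_compat; lra].
Qed.

Lemma iter_seq_half_plane (s : R) (z0 : Cplx) (n : nat) :
  0 < s * Im z0 -> 0 < s * Im (iter_seq z0 n).
Proof. intros H; induction n; simpl; [exact H | now apply step_half_plane]. Qed.

Lemma iter_seq_neq0 (z0 : Cplx) (n : nat) : Im z0 <> 0 -> iter_seq z0 n <> C0.
Proof.
  intros Hy E.
  pose proof (iter_seq_half_plane (Im z0) z0 n (Rsqr_pos_lt _ Hy)) as Hhalf.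
  rewrite E in Hhalf; unfold C0, Im in Hhalf; simpl in Hhalf; lra.
Qed.

Lemma dist2_i_step (s : R) (z : Cplx) : (s = 1 \/ s = -1) -> Im z <> 0 ->
  dist2_i (step z) s * (4 * Cnorm2 z) = dist2_i z s ^ 2.
Proof.
  intros Hs Hy; pose proof (Cnorm2_pos z Hy).
  destruct z as [x y]; unfold dist2_i, Cnorm2 in *;
    unfold step, Cmul, Csub, Cadd, Copp, Cinv, RtoC, Re, Im in *; simpl in *.
  destruct Hs as [-> | ->]; field; lra.
Qed.

Lemma dist2_i_opposite_pos (s : R) (z : Cplx) : 0 < s * Im z -> 0 < dist2_i z (- s).
Proof.
  intros H; unfold dist2_i, Cnorm2, Csub, Cadd, Copp, Re, Im in *; cbn [fst snd] in *.
  pose proof (pow2_ge_0 (fst z + - 0)); pose proof (pow2_ge_0 (snd z - s)); nra.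
Qed.

Lemma dist2_i_lt_opposite (s : R) (z : Cplx) : 0 < s * Im z -> dist2_i z s < dist2_i z (- s).
Proof. intros H; unfold dist2_i, Cnorm2, Csub, Cadd, Copp, Re, Im in *; cbn [fst snd] in *; nra. Qed.

Lemma dist2_i_opposite_le (s : R) (z : Cplx) :
  dist2_i z (- s) <= 2 * dist2_i z s + 8 * s ^ 2.
Proof.
  unfold dist2_i, Cnorm2, Csub, Cadd, Copp, Re, Im in *; cbn [fst snd] in *.
  pose proof (pow2_ge_0 (fst z + - 0)); pose proof (pow2_ge_0 (snd z - 3 * s)); nra.
Qed.

Lemma dist2_i_ratio_step (s : R) (z : Cplx) : (s = 1 \/ s = -1) -> 0 < s * Im z ->
  dist2_i (step z) s / dist2_i (step z) (- s) = (dist2_i z s / dist2_i z (- s)) ^ 2.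
Proof.
  intros Hs H.
  assert (Hy : Im z <> 0) by (intro E; rewrite E in H; lra).
  assert (Hs' : - s = 1 \/ - s = -1) by lra.
  pose proof (Cnorm2_pos z Hy).
  pose proof (dist2_i_opposite_pos s z H).
  assert (Hnear : dist2_i (step z) s = dist2_i z s ^ 2 / (4 * Cnorm2 z)).
  { rewrite <- (dist2_i_step s z Hs Hy); field; lra. }
  assert (Hfar : dist2_i (step z) (- s) = dist2_i z (- s) ^ 2 / (4 * Cnorm2 z)).
  { rewrite <- (dist2_i_step (- s) z Hs' Hy); field; lra. }
  rewrite Hnear, Hfar; field; lra.
Qed.

Lemma iter_seq_cv_root (s : R) (z0 : Cplx) : (s = 1 \/ s = -1) -> 0 < s * Im z0 ->
  Ccv (iter_seq z0) (0, s).
Proof.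
  intros Hs H.
  set (d n := dist2_i (iter_seq z0 n) s).
  set (D n := dist2_i (iter_seq z0 n) (- s)).
  assert (Hhalf : forall n, 0 < s * Im (iter_seq z0 n))
    by (intro n; now apply iter_seq_half_plane).
  assert (HD : forall n, 0 < D n) by (intro n; apply dist2_i_opposite_pos, Hhalf).
  set (r n := d n / D n).
  assert (Hunit : forall n, 0 <= r n < 1).
  { intro n; apply ratio_in_unit; split;
      [apply Cnorm2_ge0 | apply dist2_i_lt_opposite, Hhalf]. }
  assert (Hratio : Un_cv r 0).
  { apply Un_cv_squaring; [apply Hunit|].
    intro n; now apply dist2_i_ratio_step. }
  apply Ccv_of_norm2_cv0; change (Un_cv d 0).
  intros eps Heps.
  destruct (Hratio (Rmin (1 / 4) (eps / 16))) as [N HN]; [apply Rmin_pos; lra|].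
  exists N; intros n Hn; specialize (HN n Hn).
  unfold R_dist in *; rewrite !Rminus_0_r in *.
  assert (Hd : 0 <= d n) by apply Cnorm2_ge0.
  rewrite Rabs_pos_eq in HN by apply Hunit; rewrite Rabs_pos_eq by exact Hd.
  assert (Hnear : d n = r n * D n) by (pose proof (HD n); unfold r; field; lra).
  assert (Hfar : D n <= 2 * d n + 8).
  { pose proof (dist2_i_opposite_le s (iter_seq z0 n)) as Hle.
    replace 8 with (8 * s ^ 2) by (destruct Hs as [-> | ->]; ring); exact Hle. }
  (* [d <= r (2 d + 8)] with [r <= 1/4] gives [d <= 16 r]. *)
  pose proof (Rmin_l (1 / 4) (eps / 16)); pose proof (Rmin_r (1 / 4) (eps / 16)).
  pose proof (Hunit n); nra.
Qed.

Lemma Im_u0 (alpha : R) (lam : Cplx) :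
  Im (Cadd (Cmul (RtoC alpha) Ci) lam) = alpha + Im lam.
Proof. unfold Cadd, Cmul, RtoC, Ci, Re, Im; cbn [fst snd]; ring. Qed.

Lemma Im_w0 (alpha : R) (lam : Cplx) :
  Im (Csub (Cmul (RtoC alpha) Ci) lam) = alpha - Im lam.
Proof. unfold Csub, Cadd, Copp, Cmul, RtoC, Ci, Re, Im; cbn [fst snd]; ring. Qed.

Theorem mainTheorem5 (alpha : R) (lam : Cplx) :
  0 < alpha -> Im lam <> alpha -> Im lam <> - alpha ->
  (forall h : nat, u_seq alpha lam h <> C0 /\ w_seq alpha lam h <> C0) /\
  (Rabs (Im lam) < alpha ->
     Ccv (fun h => Cadd (u_seq alpha lam h) (w_seq alpha lam h))
         (Cmul (RtoC 2) Ci)) /\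
  (alpha < Rabs (Im lam) ->
     Ccv (fun h => Cadd (u_seq alpha lam h) (w_seq alpha lam h)) C0).
Proof.
  intros Halpha Hne_p Hne_m.
  pose proof (Im_u0 alpha lam) as Hu; pose proof (Im_w0 alpha lam) as Hw.
  assert (Hup : forall z0, 0 < Im z0 -> Ccv (iter_seq z0) (0, 1)).
  { intros z0 Hz; apply iter_seq_cv_root; [left; reflexivity | lra]. }
  assert (Hdown : forall z0, Im z0 < 0 -> Ccv (iter_seq z0) (0, -1)).
  { intros z0 Hz; apply iter_seq_cv_root; [right; reflexivity | lra]. }
  unfold u_seq, w_seq; split; [|split].
  - intro h; split; apply iter_seq_neq0; lra.
  - intros Hlt%Rabs_def2.
    replace (Cmul (RtoC 2) Ci) with (Cadd (0, 1) (0, 1))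
      by (unfold Cadd, Cmul, RtoC, Ci, Re, Im; cbn [fst snd]; f_equal; ring).
    apply Ccv_add; apply Hup; lra.
  - intros Hgt.
    destruct (Rle_or_lt 0 (Im lam)) as [Hpos | Hneg].
    + rewrite Rabs_pos_eq in Hgt by exact Hpos.
      replace C0 with (Cadd (0, 1) (0, -1))
        by (unfold Cadd, C0, Re, Im; cbn [fst snd]; f_equal; ring).
      apply Ccv_add; [apply Hup | apply Hdown]; lra.
    + rewrite Rabs_left in Hgt by exact Hneg.
      replace C0 with (Cadd (0, -1) (0, 1))
        by (unfold Cadd, C0, Re, Im; cbn [fst snd]; f_equal; ring).
      apply Ccv_add; [apply Hdown | apply Hup]; lra.
Qed.
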